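(* Let $R\ge0$ and $p>0$. Let $\mathcal G$ be a hypergraph and $\pi:V(\mathcal G)\to U$ a function satisfying $|\pi(E)|=|E|$ for every $E\in\mathcal G$. If $\pi(\mathcal G)$ is $(p,R)$-Janson, then $\mathcal G$ is $(p,R)$-Janson.
   Context: A hypergraph is identified with its edge set, a family of subsets of its vertex set. $\pi(\mathcal G)$ is the hypergraph with vertex set $\pi(V(\mathcal G))$ and edge set $\{\pi(E):E\in\mathcal G\}$. For $\nu:\mathcal G\to\mathbb R_{\ge0}$: $e(\nu)=\sum_{E\in\mathcal G}\nu(E)$, $d_\nu(L)=\sum_{E\in\mathcal G,L\subset E}\nu(E)$, $\Lambda_p(\nu)=\sum_{L\subset V(\mathcal G),|L|\ge2}d_\nu(L)^2p^{-|L|}$. For $R>0$, $\mathcal G$ is $(p,R)$-Janson if there is $\nu:\mathcal G\to\mathbb R_{\ge0}$ with $\Lambda_p(\nu)<e(\nu)^2/R$; for $R=0$ every hypergraph is $(p,R)$-Janson. *)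

From mathcomp Require Import all_boot all_order all_algebra.
Set Implicit Arguments. Unset Strict Implicit. Unset Printing Implicit Defensive.
Import Order.TTheory GRing.Theory Num.Theory.
Local Open Scope ring_scope.

(* A hypergraph on a finite ground type T is given by its vertex set W and
   its edge set G (a family of subsets of T). *)

Section Janson.
Variables (F : realFieldType) (T : finType).

Definition e_nu (G : {set {set T}}) (nu : {set T} -> F) : F :=
  \sum_(E in G) nu E.

Definition d_nu (G : {set {set T}}) (nu : {set T} -> F) (L : {set T}) : F :=
  \sum_(E in G | L \subset E) nu E.

Definition Lambda (W : {set T}) (G : {set {set T}}) (p : F)
    (nu : {set T} -> F) : F :=
  \sum_(L : {set T} | (L \subset W) && (2 <= #|L|)%N)
     d_nu G nu L ^+ 2 * p ^- #|L|.

Definition janson (W : {set T}) (G : {set {set T}}) (p R : F) : Prop :=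
  R = 0 \/
  (0 < R /\ exists nu : {set T} -> F,
     (forall E, E \in G -> 0 <= nu E) /\
     Lambda W G p nu < e_nu G nu ^+ 2 / R).

End Janson.

Definition image_hg (V U : finType) (pi : V -> U) (G : {set {set V}})
  : {set {set U}} := [set pi @: (E : {set V}) | E in G].

(* Given a weighting nu of pi(G), choose for each image edge M one edge E of G
   with pi(E) = M, and give E the weight nu(M), all other edges weight 0; this
   keeps e(nu).  As pi is injective on edges, every L with d(L) <> 0 satisfies
   |pi(L)| = |L|, and a chosen edge E with M inside pi(E) contains exactly one
   L with pi(L) = M, namely E :&: pi^-1(M).  So the nonnegative degrees d(L)
   over the fibre pi(L) = M sum to d'(M); the sum of their squares is at most
   d'(M)^2, and summing over M gives Lambda(lifted nu) <= Lambda'(nu). *)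

From mathcomp Require Import all_boot all_order all_algebra.
Import Order.TTheory GRing.Theory Num.Theory.
Set Implicit Arguments. Unset Strict Implicit. Unset Printing Implicit Defensive.
Local Open Scope ring_scope.

Lemma sumr_sqr_le_sqr_sum (F : realFieldType) (I : finType) (P : pred I)
    (a : I -> F) :
  (forall i, P i -> 0 <= a i) ->
  \sum_(i | P i) a i ^+ 2 <= (\sum_(i | P i) a i) ^+ 2.
Proof.
move=> a_ge0; rewrite [leRHS]expr2 mulr_suml; apply: ler_sum => i Pi.
rewrite expr2 ler_wpM2l ?a_ge0 // (bigD1 i) //= lerDl.
by apply: sumr_ge0 => j /andP[Pj _]; apply: a_ge0.
Qed.

Section LiftWeight.
Variables (F : realFieldType) (V U : finType).
Variables (G : {set {set V}}) (pi : V -> U).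
Hypothesis pi_inj_edge : forall E, E \in G -> {in E &, injective pi}.

Definition image_rep (M : {set U}) : {set V} :=
  odflt set0 [pick E in G | pi @: E == M].

Lemma image_repP (M : {set U}) :
  M \in image_hg pi G -> image_rep M \in G /\ pi @: image_rep M = M.
Proof.
rewrite /image_rep; case: pickP => [E /andP[EG /eqP <-] //|noE].
by case/imsetP=> E EG defM; have := noE E; rewrite EG -defM eqxx.
Qed.

Definition lift_weight (nu : {set U} -> F) (E : {set V}) : F :=
  if E == image_rep (pi @: E) then nu (pi @: E) else 0.

Lemma lift_weight_ge0 (nu : {set U} -> F) :
  (forall M, M \in image_hg pi G -> 0 <= nu M) ->
  forall E, E \in G -> 0 <= lift_weight nu E.
Proof.
by move=> nu_ge0 E EG; rewrite /lift_weight; case: ifP; rewrite ?nu_ge0 ?imset_f.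
Qed.

Lemma sum_lift_weight (nu : {set U} -> F) :
  \sum_(E in G) lift_weight nu E = \sum_(M in image_hg pi G) nu M.
Proof.
rewrite (partition_big (P := mem G) (fun E => pi @: E) (mem (image_hg pi G)));
  last by move=> E EG; apply: imset_f.
apply: eq_bigr => M GM; have [repG repM] := image_repP GM.
rewrite (bigD1 (image_rep M)) /=; last by rewrite repG repM eqxx.
rewrite /lift_weight repM eqxx big1 ?addr0 // => E /andP[/andP[_ /eqP EM] ne].
by rewrite EM (negbTE ne).
Qed.

Lemma imset_eq_sub_edgeE (E : {set V}) (M : {set U}) (L : {set V}) :
  E \in G -> M \subset pi @: E ->
  (pi @: L == M) && (L \subset E) = (L == E :&: pi @^-1: M).
Proof.
move=> EG ME; apply/idP/eqP => [/andP[/eqP <- LE]|->].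
  apply/setP=> x; rewrite !inE; apply/idP/andP=> [xL|[xE /imsetP[y yL]]].
    by rewrite (subsetP LE) ?imset_f.
  by move/(pi_inj_edge EG xE (subsetP LE _ yL)) ->.
rewrite subsetIl andbT; apply/eqP/setP=> u; apply/imsetP/idP.
  by case=> x; rewrite !inE => /andP[_ ?] ->.
move=> uM; case/imsetP: (subsetP ME _ uM) => x xE ux.
by exists x; rewrite // !inE xE -ux.
Qed.

Lemma sum_d_nu_lift (nu : {set U} -> F) (M : {set U}) :
  \sum_(L : {set V} | pi @: L == M) d_nu G (lift_weight nu) L =
  d_nu (image_hg pi G) nu M.
Proof.
rewrite /d_nu (exchange_big_dep (mem G)) /=; last by move=> L E _ /andP[].
rewrite [RHS]big_mkcondr -sum_lift_weight; apply: eq_bigr => E EG.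
have [ME|notME] := boolP (M \subset pi @: E).
  rewrite (eq_bigl (pred1 (E :&: pi @^-1: M))); last first.
    by move=> L; rewrite /= EG -imset_eq_sub_edgeE.
  by rewrite big_pred1_eq /lift_weight ME.
rewrite big_pred0 /lift_weight ?(negbTE notME); first by case: ifP.
by move=> L; rewrite /= EG; apply: contraNF notME => /andP[/eqP <- /imsetS].
Qed.

Lemma d_nu_eq0_or_card_imset (nu : {set V} -> F) (L : {set V}) :
  d_nu G nu L = 0 \/ #|pi @: L| = #|L|.
Proof.
have [|ne] := eqVneq #|pi @: L| #|L|; [by right | left].
apply: big1 => E /andP[EG LE]; case/negP: ne; apply/imset_injP.
exact: (sub_in2 (subsetP LE) (pi_inj_edge EG)).
Qed.

Lemma Lambda_setT_imset (p : F) (nu : {set V} -> F) :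
  Lambda [set: V] G p nu =
  \sum_(L : {set V} | (2 <= #|pi @: L|)%N) d_nu G nu L ^+ 2 * p ^- #|pi @: L|.
Proof.
rewrite /Lambda big_mkcond [RHS]big_mkcond; apply: eq_bigr => L _.
rewrite subsetT; case: (d_nu_eq0_or_card_imset nu L) => [->|-> //].
by rewrite expr0n !mul0r; do 2 case: ifP.
Qed.

Lemma Lambda_lift_le (p : F) (nu : {set U} -> F) : 0 < p ->
  (forall M, M \in image_hg pi G -> 0 <= nu M) ->
  Lambda [set: V] G p (lift_weight nu) <=
  Lambda (pi @: [set: V]) (image_hg pi G) p nu.
Proof.
move=> p_gt0 nu_ge0; rewrite Lambda_setT_imset /Lambda.
rewrite (partition_big (P := fun L : {set V} => (2 <= #|pi @: L|)%N)
           (fun L => pi @: L)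
           (fun M => (M \subset pi @: [set: V]) && (2 <= #|M|)%N)) /=;
  last by move=> L ->; rewrite imsetS ?subsetT.
apply: ler_sum => M /andP[_ M2].
rewrite (eq_bigl (fun L : {set V} => pi @: L == M)); last first.
  by move=> L; case: eqP => [->|]; rewrite ?M2 ?andbF.
rewrite (eq_bigr (fun L => d_nu G (lift_weight nu) L ^+ 2 * p ^- #|M|));
  last by move=> L /eqP ->.
rewrite -mulr_suml ler_wpM2r ?invr_ge0 ?exprn_ge0 ?(ltW p_gt0) // -sum_d_nu_lift.
apply: sumr_sqr_le_sqr_sum => L _.
by apply: sumr_ge0 => E /andP[EG _]; apply: lift_weight_ge0.
Qed.

End LiftWeight.

Theorem lemma3p5 (F : realFieldType) (V U : finType) (R p : F)
  (G : {set {set V}}) (pi : V -> U) :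
  0 <= R -> 0 < p ->
  (forall E, E \in G -> #|pi @: E| = #|E|) ->
  janson (pi @: [set: V]) (image_hg pi G) p R ->
  janson [set: V] G p R.
Proof.
move=> _ p_gt0 card_pi.
have pi_inj_edge E : E \in G -> {in E &, injective pi}.
  by move=> EG; apply/imset_injP; rewrite card_pi.
case=> [->|[R_gt0 [nu [nu_ge0 Lambda_lt]]]]; [by left | right; split=> //].
exists (lift_weight G pi nu); split; first exact: lift_weight_ge0.
rewrite /e_nu sum_lift_weight; apply: le_lt_trans Lambda_lt.
exact: Lambda_lift_le.
Qed.
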